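(* In the model described in the context, if correct readers sign their read requests, then Algorithm 1 with threshold $t\ge1$ satisfies weak accuracy.
   Context: Model. An asynchronous system has client processes (writers, readers, auditors) and $n$ storage objects $o_1,\dots,o_n$. Each $o_k$ is a loggable read/write register with a log $L_k$. Its rw-read() returns the current block and appends $\langle p_r,\mathit{label}(b)\rangle$ to $L_k$, where $p_r$ is the reader and $\mathit{label}(b)$ identifies the value from which $b$ was derived; rw-getLog() returns $L_k$. A register over values $\mathbb{V}$ is emulated by information dispersal: block $b_{v_k}$ of $v$ is stored at $o_k$, and any $\tau>f$ distinct blocks recover $v$. Reads are fast. Faults. At most $f$ storage objects are faulty; a faulty object may crash, omit its block, omit log records from auditors, and report records of nonexistent reads. Signed reads: correct readers digitally sign (unforgeably) their read requests, and a record is considered correct by the auditor only if accompanied by a valid signed read request of the named reader. Hence a faulty object cannot create a correct record about a reader from which it never received a signed request. Providing set $P_{p_r,v}$: the set of objects that received a write of $b_{v_k}$ and responded $b_{v_k}$ to a read request of $p_r$. Algorithm 1 (a-audit with threshold $t$): 1. Invoke rw-getLog on all $n$ objects in parallel, and wait for responses from at least $n-f$; let $L[k]$ be the log received from $o_k$. 2. For every (correct) record $\langle p_r,\mathit{label}(v)\rangle$ in some $L[k]$, let $\mathcal{E}_{p_r,v}=\{k:\langle p_r,\mathit{label}(v)\rangle\in L[k]\}$, and add it to $E_A$ iff $|\mathcal{E}_{p_r,v}|\ge t$. 3. Return $E_A$. Weak accuracy: for every correct reader $p_r$ that never invoked an a-read before the audit (so $P_{p_r,v}=\varnothing$), $\mathcal{E}_{p_r,v}\notin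 E_A$ for all $v$. *)

From mathcomp Require Import all_boot.
Set Implicit Arguments. Unset Strict Implicit. Unset Printing Implicit Defensive.

(* A log record <p_r, label(v)> together with the signed read request
   (signature) that accompanies it: (reader, label, signature). *)
Definition log_record (Reader Label Sig : eqType) := (Reader * Label * Sig)%type.

Section Audit.
Variables (n : nat) (Reader Label Sig : eqType).
(* verify p s : s is a valid signature of p on a read request *)
Variable verify : Reader -> Sig -> bool.

Definition rec_reader (r : log_record Reader Label Sig) : Reader := r.1.1.
Definition rec_label (r : log_record Reader Label Sig) : Label := r.1.2.
Definition rec_sig (r : log_record Reader Label Sig) : Sig := r.2.

Definition rec_correct (r : log_record Reader Label Sig) : bool :=
  verify (rec_reader r) (rec_sig r).

(* L k = Some log : the auditor received log L[k] from o_k;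
   L k = None : no response from o_k (among the ones not waited for). *)
Variable L : 'I_n -> option (seq (log_record Reader Label Sig)).

Definition responders : {set 'I_n} := [set k | L k != None].

Definition Eset (p : Reader) (l : Label) : {set 'I_n} :=
  [set k | if L k is Some lg then
             has (fun r => [&& rec_correct r, rec_reader r == p & rec_label r == l]) lg
           else false].

Definition all_records : seq (log_record Reader Label Sig) :=
  flatten [seq odflt [::] (L k) | k <- enum 'I_n].

Definition a_audit (t : nat) : seq (Reader * Label * {set 'I_n}) :=
  undup [seq (rec_reader r, rec_label r, Eset (rec_reader r) (rec_label r))
        | r <- all_records & rec_correct r && (t <= #|Eset (rec_reader r) (rec_label r)|)].

End Audit.

(* A triple enters the audit output only through a correct record, i.e. one
   carrying a valid signature of the reader it names.  By unforgeability such a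
   signature of a correct reader was issued by that reader, and a correct reader
   that never invoked an a-read has signed nothing, so no output triple names
   it. *)
From mathcomp Require Import all_boot.

Set Implicit Arguments. Unset Strict Implicit. Unset Printing Implicit Defensive.

Section AuditOutput.
Variables (n : nat) (Reader Label Sig : eqType) (verify : Reader -> Sig -> bool).
Variable L : 'I_n -> option (seq (log_record Reader Label Sig)).

Lemma a_audit_correct_record t p l E :
  (p, l, E) \in a_audit verify L t ->
  exists2 r : log_record Reader Label Sig, rec_correct verify r & rec_reader r = p.
Proof.
rewrite /a_audit mem_undup => /mapP [r].
rewrite mem_filter => /andP [/andP [r_ok _] _] [r_p _ _].
by exists r.
Qed.

Variables (correct_reader : Reader -> bool) (signed : Reader -> seq Sig).
Hypothesis unforgeable :
  forall p s, correct_reader p -> verify p s -> s \in signed p.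

Lemma a_audit_unsigned_reader t p l E :
  correct_reader p -> signed p = [::] -> (p, l, E) \notin a_audit verify L t.
Proof.
move=> p_correct p_unsigned; apply/negP => /a_audit_correct_record [r r_ok r_p].
have := unforgeable (s := rec_sig r) p_correct.
by rewrite p_unsigned -r_p => /(_ r_ok).
Qed.

End AuditOutput.

Theorem lemma8
  (n f t : nat) (Reader Label Sig V : eqType) (label : V -> Label)
  (verify : Reader -> Sig -> bool)
  (faulty : {set 'I_n})
  (correct_reader : Reader -> bool)
  (invoked_read : Reader -> bool)
  (signed : Reader -> seq Sig)
  (L : 'I_n -> option (seq (log_record Reader Label Sig)))
  (* at most f faulty storage objects *)
  (Hf : #|faulty| <= f)
  (* the auditor waits for responses from at least n - f objects *)
  (Hresp : n - f <= #|responders L|)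
  (* signatures are unforgeable: a valid signature of a correct reader on a
     read request exists only if that reader signed (issued) it *)
  (Hunforge : forall p s, correct_reader p -> verify p s -> s \in signed p)
  (* correct readers sign read requests only while invoking an a-read *)
  (Hsign : forall p, correct_reader p -> ~~ invoked_read p -> signed p = [::])
  (Ht : 1 <= t) :
  forall p, correct_reader p -> ~~ invoked_read p ->
    forall (v : V) (E : {set 'I_n}), (p, label v, E) \notin a_audit verify L t.
Proof.
move=> p p_correct p_idle v E.
exact: (a_audit_unsigned_reader _ Hunforge _ _ _ p_correct
          (Hsign p p_correct p_idle)).
Qed.
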